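(* Assume Assumption (S) and the upwind condition $A_{i,0}=0$ for all $i$. Let $\mathbb D^*$ be defined by $(\mathbb D^*v,\omega)_*=\tau\mathcal H^*(v,\omega)$ for all $\omega\in\mathbb V^k$, and let $R_s^*(v)=\sum_{\kappa=0}^s\alpha_\kappa(\mathbb D^* )^\kappa v$ with $\alpha_\kappa$ the coefficients of the polynomial $P_s(z)=\sum_{\kappa=0}^s\alpha_\kappa z^\kappa$ defined by $P_0(z)=1$, $P_{\ell+1}(z)=\sum_{0\le\kappa\le\ell}(c_{\ell\kappa}+d_{\ell\kappa}z)P_\kappa(z)$. Then there exist constants $\{b_\kappa\}$ and $\{b_{\kappa,\kappa_0}\}$ with $b_{\kappa,\kappa_0}=b_{\kappa_0,\kappa}$ such that for every $v\in\mathbb V^k$, $$\|R_s^*(v)\|_*^2=\|v\|_*^2+\sum_{\kappa=1}^sb_\kappa\|(\mathbb D^* )^\kappa v\|_*^2-\tau\sum_{0\le\kappa,\kappa_0<s}b_{\kappa,\kappa_0}\langle[\![(\mathbb D^* )^\kappa v]\!],[\![(\mathbb D^* )^{\kappa_0}v]\!]\rangle.$$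
   Context: Let $\Omega=[a,b]$ be partitioned into finitely many cells $I_i=[x_{i-\frac12},x_{i+\frac12}]$ with sizes $h_i$; indices periodic. $(\cdot,\cdot)$: $L^2(\Omega)$ inner product; $(\cdot,\cdot)_{I_i}$: $L^2(I_i)$ inner product. $\mathbb V^k=\{v\in L^2(\Omega): v|_{I_i}\in\mathbb P^k(I_i)\ \forall i\}$. Each $I_i$ has subdivision points $x_{i-\frac12}=x_{i,0}<x_{i,1}<\dots<x_{i,k}<x_{i,k+1}=x_{i+\frac12}$, control volumes $I_{i,j}=[x_{i,j},x_{i,j+1}]$; $\mathbb V^{k,*}$ = functions constant on each $I_{i,j}$. Quadrature on $I_i$: $Q_i^k(v)=\sum_{j=0}^{k+1}A_{i,j}v(x_{i,j})$ (applied to restrictions to $I_i$), error $R_i^k(v)=\int_{I_i}v\,dx-Q_i^k(v)$, exact on $\mathbb P^{k-1}(I_i)$. $M^*:\mathbb V^k\to\mathbb V^{k,*}$: for $v=\omega|_{I_i}$, $(M^*\omega)|_{I_{i,0}}=v(x_{i-\frac12})+A_{i,0}v'(x_{i-\frac12})$, $(M^*\omega)|_{I_{i,j}}-(M^*\omega)|_{I_{i,j-1}}=A_{i,j}v'(x_{i,j})$, $j=1,\dots,k$. $L_{i,\ell}$: shifted Legendre polynomial of degree $\ell$ on $I_i$, $L_{i,\ell}(x_{i+\frac12})=1$, $(L_{i,\ell},L_{i,m})_{I_i}=\delta_{\ell m}h_i/(2\ell+1)$. Assumption (S): $k\ge1$ and for every $i$, $R_i^k$ vanishes on $\mathbb P^{2k-1}(I_i)$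 and $\frac{h_i}{2k-1}-Q_i^k(L_{i,k+1}L_{i,k-1})>0$; then $(v,\omega)_*:=(v,M^*\omega)$ is an inner product on $\mathbb V^k$, $\|v\|_*=\sqrt{(v,v)_*}$. Jumps $[\![v]\!]_{i+\frac12}=v(x_{i+\frac12}^+)-v(x_{i+\frac12}^-)$, $\langle[\![v]\!],[\![\omega]\!]\rangle=\sum_i[\![v]\!]_{i+\frac12}[\![\omega]\!]_{i+\frac12}$. With $A_{i,0}=0$, for $v,\omega\in\mathbb V^k$: $\mathcal H^*(v,\omega)=\beta\big(\sum_iQ_i^k(v\omega_x)+\sum_iv(x_{i+\frac12}^-)[\![\omega]\!]_{i+\frac12}\big)$, $\beta>0$. $c_{\ell\kappa},d_{\ell\kappa}$ ($0\le\kappa\le\ell\le s-1$, $\sum_\kappa c_{\ell\kappa}=1$) are the coefficients of an explicit $s$-stage Runge–Kutta method, $\tau>0$ the time step. *)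

From mathcomp Require Import all_boot all_order all_algebra.
Set Implicit Arguments. Unset Strict Implicit. Unset Printing Implicit Defensive.
Import Order.TTheory GRing.Theory Num.Theory.
Local Open Scope ring_scope.

Definition prim (R : fieldType) (p : {poly R}) : {poly R} :=
  \poly_(i < (size p).+1) (if i is j.+1 then p`_j / j.+1%:R else 0).
Definition pint (R : fieldType) (p : {poly R}) (a b : R) : R :=
  (prim p).[b] - (prim p).[a].

Fixpoint leg_pair (R : fieldType) (n : nat) : {poly R} * {poly R} :=
  match n with
  | 0 => (1, 'X)
  | m.+1 => let pq := leg_pair R m in
      (pq.2, (m.+2%:R)^-1 *: ((m.*2 + 3)%:R *: ('X * pq.2) - m.+1%:R *: pq.1))
  end.
Definition legendre (R : fieldType) (n : nat) : {poly R} := (leg_pair R n).1.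

(* ---------- the mesh ----------
   N cells I_i = [x i, x (i+1)], i : 'I_N, indices periodic;
   xs i j = x_{i,j} (j = 0..k+1), A i j = A_{i,j}.
   A function of V^k is a family v : 'I_N -> {poly R} of polynomials of
   size <= k+1 (degree <= k), v i being the restriction of v to I_i. *)

Definition inVk (R : nzRingType) (N k : nat) (v : 'I_N -> {poly R}) : Prop :=
  forall i, (size (v i) <= k.+1)%N.

Definition hcell (R : nzRingType) (N : nat) (x : nat -> R) (i : 'I_N) : R :=
  x i.+1 - x i.

Definition shleg (R : fieldType) (N : nat) (x : nat -> R) (i : 'I_N) (l : nat)
  : {poly R} :=
  legendre R l \Po ((2 / hcell x i) *: 'X - ((x i + x i.+1) / hcell x i)%:P).

Definition quad (R : nzRingType) (N k : nat) (xs A : 'I_N -> nat -> R) (i : 'I_N)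
  (p : {poly R}) : R :=
  \sum_(j < k.+2) A i j * p.[xs i j].
Definition quad_err (R : fieldType) (N k : nat) (x : nat -> R)
  (xs A : 'I_N -> nat -> R) (i : 'I_N) (p : {poly R}) : R :=
  pint p (x i) (x i.+1) - quad k xs A i p.

Definition assumptionS (R : realFieldType) (N k : nat) (x : nat -> R)
  (xs A : 'I_N -> nat -> R) : Prop :=
  (1 <= k)%N /\
  forall i : 'I_N,
    (forall p : {poly R}, (size p <= k.*2)%N -> quad_err k x xs A i p = 0) /\
    hcell x i / (k.*2 - 1)%:R - quad k xs A i (shleg x i k.+1 * shleg x i k.-1) > 0.

(* value of M^star w on the control volume I_{i,j} = [x_{i,j}, x_{i,j+1}], j = 0..k:
   w_i(x_{i-1/2}) + sum_{l=0}^{j} A_{i,l} w_i'(x_{i,l})  (unfolded recursion) *)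
Definition Mstar (R : nzRingType) (N : nat) (xs A : 'I_N -> nat -> R)
  (w : 'I_N -> {poly R}) (i : 'I_N) (j : nat) : R :=
  (w i).[xs i 0] + \sum_(l < j.+1) A i l * (w i)^`().[xs i l].

(* (v,w)_star := (v, M^star w) *)
Definition ipstar (R : fieldType) (N k : nat) (xs A : 'I_N -> nat -> R)
  (v w : 'I_N -> {poly R}) : R :=
  \sum_(i < N) \sum_(j < k.+1) Mstar xs A w i j * pint (v i) (xs i j) (xs i j.+1).

Definition jump (R : nzRingType) (N : nat) (x : nat -> R) (v : 'I_N -> {poly R})
  (i : 'I_N) : R :=
  (v (ordS i)).[x (ordS i)] - (v i).[x i.+1].

Definition jumpip (R : nzRingType) (N : nat) (x : nat -> R) (v w : 'I_N -> {poly R}) : R :=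
  \sum_(i < N) jump x v i * jump x w i.

(* H^star(v, w) (upwind case A_{i,0} = 0) *)
Definition Hstar (R : nzRingType) (N k : nat) (x : nat -> R) (xs A : 'I_N -> nat -> R)
  (beta : R) (v w : 'I_N -> {poly R}) : R :=
  beta * (\sum_(i < N) quad k xs A i (v i * (w i)^`())
          + \sum_(i < N) (v i).[x i.+1] * jump x w i).

Fixpoint rk_polys (R : nzRingType) (c d : nat -> nat -> R) (n : nat) : seq {poly R} :=
  match n with
  | 0 => [:: 1]
  | m.+1 => let ps := rk_polys c d m in
      rcons ps (\sum_(kap < m.+1) ((c m kap)%:P + d m kap *: 'X) * nth 0 ps kap)
  end.
Definition rk_poly (R : nzRingType) (c d : nat -> nat -> R) (n : nat) : {poly R} :=
  nth 0 (rk_polys c d n) n.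

Definition Rstar (R : nzRingType) (N : nat) (c d : nat -> nat -> R) (s : nat)
  (D : ('I_N -> {poly R}) -> ('I_N -> {poly R})) (v : 'I_N -> {poly R})
  : 'I_N -> {poly R} :=
  fun i => \sum_(kap < s.+1) (rk_poly c d s)`_kap *: (iter kap D v) i.

From mathcomp Require Import all_boot all_order all_algebra.
From mathcomp Require Import ring zify.
Import Order.TTheory GRing.Theory Num.Theory.
Local Open Scope ring_scope.
Set Implicit Arguments. Unset Strict Implicit. Unset Printing Implicit Defensive.

(* Exactness of the quadrature on P^{2k-1} and summation by parts on each cell
   make (.,.)_* symmetric on V^k, and give H^*(u,w) + H^*(w,u) = - beta <[u],[w]>
   once the periodic boundary terms telescope.  Hence f(a,b) := (D^a v, D^b v)_*
   is symmetric with f(a+1,b) + f(a,b+1) = - tau beta <[D^a v],[D^b v]>.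
   Expanding ||R_s^* v||_*^2 = sum alpha_i alpha_j f(i,j) and moving one D at a
   time from the larger index to the smaller turns each f(i,j) into +-f(m,m),
   m = (i+j)/2 (or 0 when i+j is odd), plus jump terms, with coefficients
   depending on the alpha's only; f(0,0) comes with alpha_0^2 = P_s(0)^2 = 1. *)

Section Antiderivative.
Variable R : numFieldType.
Implicit Types p q : {poly R}.

Lemma coef_prim p j : (prim p)`_j = if j is j'.+1 then p`_j' / j'.+1%:R else 0.
Proof.
rewrite /prim coef_poly; case: j => [|j] //=; case: ltnP => // le_pj.
by rewrite nth_default // mul0r.
Qed.

Lemma size_prim p : (size (prim p) <= (size p).+1)%N.
Proof. exact: size_poly. Qed.

Lemma deriv_prim p : (prim p)^`() = p.
Proof.
apply/polyP => j; rewrite coef_deriv coef_prim /= -(mulr_natr (p`_j / _)) divfK //.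
by rewrite pnatr_eq0.
Qed.

Lemma prim_deriv p : prim p^`() = p - (p`_0)%:P.
Proof.
apply/polyP => -[|j]; rewrite coef_prim coefB coefC /=; first by rewrite subrr.
by rewrite coef_deriv -(mulr_natr (p`_j.+1)) mulfK ?subr0 // pnatr_eq0.
Qed.

Lemma prim_sumZ n (a : nat -> R) (F : nat -> {poly R}) :
  prim (\sum_(m < n) a m *: F m) = \sum_(m < n) a m *: prim (F m).
Proof.
apply/polyP => -[|j]; rewrite coef_prim coef_sum.
  by rewrite big1 // => m _; rewrite coefZ coef_prim mulr0.
rewrite coef_sum mulr_suml; apply: eq_bigr => m _.
by rewrite !coefZ coef_prim mulrA.
Qed.

Lemma pint_deriv p a b : pint p^`() a b = p.[b] - p.[a].
Proof. by rewrite /pint prim_deriv !hornerE; ring. Qed.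

Lemma pint_sumZ n (c : nat -> R) (F : nat -> {poly R}) a b :
  pint (\sum_(m < n) c m *: F m) a b = \sum_(m < n) c m * pint (F m) a b.
Proof.
rewrite /pint prim_sumZ !horner_sum -sumrB.
by apply: eq_bigr => m _; rewrite !hornerZ mulrBr.
Qed.

End Antiderivative.

Section PolySize.
Variable R : nzSemiRingType.
Implicit Types p q : {poly R}.

Lemma size_deriv_leq p n : (size p <= n.+1)%N -> (size p^`() <= n)%N.
Proof.
move/leq_sizeP => p_hi; apply/leq_sizeP => j le_nj.
by rewrite coef_deriv p_hi ?mul0rn.
Qed.

Lemma size_polyM_leq p q m n :
  (size p <= m.+1)%N -> (size q <= n.+1)%N -> (size (p * q)%R <= (m + n).+1)%N.
Proof. by move=> Hp Hq; apply: leq_trans (size_polyMleq p q) _; lia. Qed.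

Lemma coefM_top p q m n : (size p <= m.+1)%N -> (size q <= n.+1)%N ->
  (p * q)`_(m + n) = p`_m * q`_n.
Proof.
move=> Hp Hq; rewrite coefM (bigD1 (Ordinal (leq_addr n m.+1))) //= addKn.
rewrite big1 ?addr0 // => j /eqP ne_jm.
have [lt_mj | le_jm] := ltnP m j.
  by rewrite (nth_default _ (leq_trans Hp lt_mj)) mul0r.
have ne_jm' : nat_of_ord j <> m by move=> eq_jm; apply: ne_jm; apply: val_inj.
by rewrite (nth_default _ (_ : size q <= m + n - j)%N) ?mulr0 //; lia.
Qed.

End PolySize.

Lemma abel_summation (R : comNzRingType) n (w0 : R) (a P : nat -> R) :
  \sum_(j < n.+1) (w0 + \sum_(l < j.+1) a l) * (P j.+1 - P j) =
  (w0 + \sum_(l < n.+1) a l) * P n.+1 - w0 * P 0%N - \sum_(j < n.+1) a j * P j.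
Proof.
elim: n => [|n IH]; first by rewrite !big_ord1; ring.
by rewrite big_ord_recr /= IH !(big_ord_recr n.+1) /=; ring.
Qed.

Section QuadratureForms.
Variables (R : numFieldType) (N k : nat) (x : nat -> R) (xs A : 'I_N -> nat -> R).
Implicit Types (p q : {poly R}) (u v w : 'I_N -> {poly R}) (i : 'I_N).

Lemma quadD i p q : quad k xs A i (p + q) = quad k xs A i p + quad k xs A i q.
Proof. by rewrite /quad -big_split; apply: eq_bigr => j _; rewrite hornerD mulrDr. Qed.

Lemma quadB i p q : quad k xs A i (p - q) = quad k xs A i p - quad k xs A i q.
Proof. by rewrite /quad -sumrB; apply: eq_bigr => j _; rewrite hornerD hornerN mulrBr. Qed.

Definition cell_ip i (v w : {poly R}) : R :=
  \sum_(j < k.+1) (w.[xs i 0%N] + \sum_(l < j.+1) A i l * w^`().[xs i l])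
                  * pint v (xs i j) (xs i j.+1).

Lemma Mstar_sumZ n (a : nat -> R) (F : nat -> 'I_N -> {poly R}) i j :
  Mstar xs A (fun i => \sum_(m < n) a m *: F m i) i j
  = \sum_(m < n) a m * Mstar xs A (F m) i j.
Proof.
rewrite /Mstar /= horner_sum raddf_sum /=.
under [X in _ + X = _]eq_bigr => l _ do rewrite horner_sum mulr_sumr.
rewrite exchange_big -big_split /=; apply: eq_bigr => m _.
rewrite hornerZ mulrDr mulr_sumr; congr (_ + _); apply: eq_bigr => l _.
by rewrite derivZ hornerZ mulrCA.
Qed.

Lemma ipstar_sumZl n (a : nat -> R) (F : nat -> 'I_N -> {poly R}) w :
  ipstar k xs A (fun i => \sum_(m < n) a m *: F m i) w
  = \sum_(m < n) a m * ipstar k xs A (F m) w.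
Proof.
rewrite /ipstar; under eq_bigr => i _ do under eq_bigr => j _ do
  rewrite (pint_sumZ _ a (fun m => F m i)) mulr_sumr.
under eq_bigr do rewrite exchange_big.
rewrite exchange_big; apply: eq_bigr => m _; rewrite mulr_sumr.
by apply: eq_bigr => i _; rewrite mulr_sumr; apply: eq_bigr => j _; rewrite mulrCA.
Qed.

Lemma ipstar_sumZr n (a : nat -> R) (F : nat -> 'I_N -> {poly R}) v :
  ipstar k xs A v (fun i => \sum_(m < n) a m *: F m i)
  = \sum_(m < n) a m * ipstar k xs A v (F m).
Proof.
rewrite /ipstar; under eq_bigr do under eq_bigr do rewrite Mstar_sumZ mulr_suml.
under eq_bigr do rewrite exchange_big.
rewrite exchange_big; apply: eq_bigr => m _; rewrite mulr_sumr.
by apply: eq_bigr => i _; rewrite mulr_sumr; apply: eq_bigr => j _; rewrite mulrA.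
Qed.

Lemma ipstar_sum_sum n (a : nat -> R) (F : nat -> 'I_N -> {poly R}) :
  ipstar k xs A (fun i => \sum_(m < n) a m *: F m i) (fun i => \sum_(m < n) a m *: F m i)
  = \sum_(m < n) \sum_(m' < n) a m * a m' * ipstar k xs A (F m) (F m').
Proof.
rewrite ipstar_sumZl; apply: eq_bigr => m _.
by rewrite ipstar_sumZr mulr_sumr; apply: eq_bigr => m' _; rewrite mulrA.
Qed.

Lemma jumpipC u w : jumpip x u w = jumpip x w u.
Proof. by apply: eq_bigr => i _; rewrite mulrC. Qed.

Hypothesis xs_first : forall i, xs i 0%N = x i.
Hypothesis xs_last : forall i, xs i k.+1 = x i.+1.
Hypothesis quad_exact : forall i p,
  (size p <= k.*2)%N -> quad k xs A i p = pint p (x i) (x i.+1).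

Lemma cell_ip_by_parts i (v w : {poly R}) : (size w <= k.+1)%N ->
  cell_ip i v w = w.[x i.+1] * (prim v).[x i.+1] - w.[x i] * (prim v).[x i]
                  - quad k xs A i (w^`() * prim v).
Proof.
move=> Hw; rewrite /cell_ip /pint.
rewrite (abel_summation _ _ (fun l => A i l * w^`().[xs i l])
                           (fun j => (prim v).[xs i j])) xs_first xs_last.
have w'_exact : quad k xs A i w^`() = w.[x i.+1] - w.[x i].
  by rewrite quad_exact ?pint_deriv // (leq_trans (size_deriv_leq Hw)) //; lia.
rewrite /quad (big_ord_recr k.+1) /= xs_last in w'_exact *.
have -> : w.[x i.+1] = w.[x i] + \sum_(l < k.+1) A i l * w^`().[xs i l]
                       + A i k.+1 * w^`().[x i.+1].
  by rewrite -addrA w'_exact; ring.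
under [in RHS]eq_bigr do rewrite hornerM mulrA.
by rewrite (big_ord_recr k.+1) /= xs_last; ring.
Qed.

Lemma cell_ipC i (v w : {poly R}) : (size v <= k.+1)%N -> (size w <= k.+1)%N ->
  cell_ip i v w = cell_ip i w v.
Proof.
move=> Hv Hw; rewrite !cell_ip_by_parts //.
have HV : (size (prim v) <= k.+2)%N by apply: leq_trans (size_prim v) _.
have HW : (size (prim w) <= k.+2)%N by apply: leq_trans (size_prim w) _.
pose r := w * prim v - v * prim w.
have r'E : r^`() = w^`() * prim v - v^`() * prim w.
  by rewrite /r derivB !derivM !deriv_prim; ring.
(* the leading coefficients w_k v_k / (k+1) of [w * prim v] and [v * prim w] cancel *)
have size_r : (size r <= k.*2.+1)%N.
  apply/leq_sizeP => j; rewrite leq_eqVlt => /orP[/eqP <- | lt_j].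
    have -> : k.*2.+1 = (k + k.+1)%N by lia.
    by rewrite coefB (coefM_top Hw HV) (coefM_top Hv HW) !coef_prim /=; ring.
  have /leq_sizeP -> // : (size r <= k.*2.+2)%N.
    apply: leq_trans (size_polyD _ _) _; rewrite size_polyN geq_max.
    by rewrite (leq_trans (size_polyM_leq Hw HV))
               ?(leq_trans (size_polyM_leq Hv HW)) //; lia.
have := quad_exact i (size_deriv_leq size_r).
rewrite pint_deriv r'E quadB /r !hornerE => /eqP; rewrite subr_eq => /eqP ->; ring.
Qed.

Lemma ipstarC v w : inVk k v -> inVk k w -> ipstar k xs A v w = ipstar k xs A w v.
Proof. by move=> Hv Hw; apply: eq_bigr => i _; apply: cell_ipC. Qed.

Lemma quad_mul_deriv i p q : (size p <= k.+1)%N -> (size q <= k.+1)%N ->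
  quad k xs A i (p * q^`()) + quad k xs A i (q * p^`())
  = p.[x i.+1] * q.[x i.+1] - p.[x i] * q.[x i].
Proof.
move=> Hp Hq; rewrite -quadD.
have -> : p * q^`() + q * p^`() = (p * q)^`() by rewrite derivM; ring.
rewrite quad_exact; first by rewrite pint_deriv !hornerM.
by apply: size_deriv_leq; apply: leq_trans (size_polyM_leq Hp Hq) _; lia.
Qed.

(* By periodicity the boundary terms (u_i w_i)(x_i) of the cell-wise integration
   by parts telescope away. *)
Lemma Hstar_addC beta u w : inVk k u -> inVk k w ->
  Hstar k x xs A beta u w + Hstar k x xs A beta w u = - (beta * jumpip x u w).
Proof.
move=> Hu Hw; rewrite /Hstar -mulrDr -mulrN; congr (beta * _).
rewrite addrACA -!big_split /=.
under eq_bigr => i _ do rewrite quad_mul_deriv //.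
have shift : \sum_(i < N) (u (ordS i)).[x (ordS i)] * (w (ordS i)).[x (ordS i)]
             = \sum_(i < N) (u i).[x i] * (w i).[x i].
  by rewrite [RHS](reindex_inj (@ordS_inj N)).
rewrite /jumpip -sumrN.
transitivity (\sum_(i < N) ((- (jump x u i * jump x w i))
  + ((u (ordS i)).[x (ordS i)] * (w (ordS i)).[x (ordS i)] - (u i).[x i] * (w i).[x i]))).
  by apply: eq_bigr => i _; rewrite /jump; ring.
by rewrite big_split sumrB /= shift subrr addr0.
Qed.

End QuadratureForms.

Lemma assumptionS_quad_exact (R : realFieldType) (N k : nat) (x : nat -> R)
    (xs A : 'I_N -> nat -> R) :
  assumptionS k x xs A -> forall (i : 'I_N) (p : {poly R}),
  (size p <= k.*2)%N -> quad k xs A i p = pint p (x i) (x i.+1).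
Proof.
by move=> [_ HS] i p Hp; apply/esym/eqP; rewrite -subr_eq0; apply/eqP/(HS i).1.
Qed.

Section StabilityPolynomial.
Variables (R : nzRingType) (c d : nat -> nat -> R).

Lemma size_rk_polys n : size (rk_polys c d n) = n.+1.
Proof. by elim: n => [|n IH] //=; rewrite size_rcons IH. Qed.

Lemma nth_rk_polys n j : (j <= n)%N -> nth 0 (rk_polys c d n) j = rk_poly c d j.
Proof.
elim: n => [|n IH] le_jn; first by case: j le_jn.
rewrite /= nth_rcons size_rk_polys; case: ltnP => [lt_jn | le_nj]; first exact: IH.
have -> : j = n.+1 by lia.
by rewrite /rk_poly /= nth_rcons size_rk_polys ltnn eqxx.
Qed.

Lemma rk_polyS n : rk_poly c d n.+1 =
  \sum_(m < n.+1) ((c n m)%:P + d n m *: 'X) * rk_poly c d m.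
Proof.
rewrite /rk_poly /= nth_rcons size_rk_polys ltnn eqxx.
by apply: eq_bigr => m _; rewrite nth_rk_polys // -ltnS.
Qed.

Lemma rk_poly_coef0 n : (forall l, (l < n)%N -> \sum_(m < l.+1) c l m = 1) ->
  (rk_poly c d n)`_0 = 1.
Proof.
elim/ltn_ind: n => -[|n] IH c_rows; first by rewrite /rk_poly /= coef1.
rewrite rk_polyS coef_sum -(c_rows n) //; apply: eq_bigr => m _.
rewrite coef0M coefD coefC coefZ coefX mulr0 addr0 IH ?mulr1 // => l lt_lm.
by apply: c_rows; move: (ltn_ord m); lia.
Qed.

End StabilityPolynomial.

Section PairSums.
Variable R : comNzRingType.
Implicit Types G H J : nat -> nat -> R.

Lemma sum_ord_delta n a (F : nat -> R) : (a < n)%N ->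
  \sum_(j < n) (j == a :> nat)%:R * F j = F a.
Proof.
move=> lt_an; under eq_bigr do rewrite mulr_natl mulrb.
by rewrite -big_mkcond big_ord1_eq lt_an.
Qed.

Definition pair_sum s G J : R := \sum_(p < s) \sum_(q < s) G p q * J p q.

Definition pair_delta (a b p q : nat) : R := (p == a)%:R * (q == b)%:R.

Lemma pair_sum_delta s a b J : (a < s)%N -> (b < s)%N ->
  pair_sum s (pair_delta a b) J = J a b.
Proof.
move=> lt_as lt_bs; rewrite /pair_sum /pair_delta.
under eq_bigr do under eq_bigr do rewrite -mulrA.
under eq_bigr do rewrite -mulr_sumr (sum_ord_delta (fun q => J _ q)) //.
exact: (sum_ord_delta (fun p => J p b)).
Qed.

Lemma pair_sumD s G H J :
  pair_sum s (fun p q => G p q + H p q) J = pair_sum s G J + pair_sum s H J.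
Proof.
rewrite /pair_sum -big_split; apply: eq_bigr => p _.
by rewrite -big_split; apply: eq_bigr => q _; rewrite mulrDl.
Qed.

Lemma pair_sumB s G H J :
  pair_sum s (fun p q => G p q - H p q) J = pair_sum s G J - pair_sum s H J.
Proof.
rewrite /pair_sum -sumrB; apply: eq_bigr => p _.
by rewrite -sumrB; apply: eq_bigr => q _; rewrite mulrBl.
Qed.

Lemma pair_sumZ s a G J :
  pair_sum s (fun p q => a * G p q) J = a * pair_sum s G J.
Proof.
rewrite /pair_sum mulr_sumr; apply: eq_bigr => p _.
by rewrite mulr_sumr; apply: eq_bigr => q _; rewrite mulrA.
Qed.

Lemma pair_sum_sum s n (F : nat -> nat -> nat -> R) J :
  pair_sum s (fun p q => \sum_(i < n) F i p q) J = \sum_(i < n) pair_sum s (F i) J.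
Proof.
rewrite /pair_sum; under eq_bigr do under eq_bigr do rewrite mulr_suml.
by under eq_bigr do rewrite exchange_big; rewrite exchange_big.
Qed.

Lemma pair_sum_tr s G J : (forall a b, J a b = J b a) ->
  pair_sum s (fun p q => G q p) J = pair_sum s G J.
Proof.
move=> JC; rewrite /pair_sum exchange_big.
by apply: eq_bigr => p _; apply: eq_bigr => q _; rewrite JC.
Qed.

End PairSums.

Arguments pair_delta {R} a b p q.

Section QuadraticFormReduction.
Variable R : numFieldType.

(* From [f(i, i+d+2) = - f(i+1, i+d+1) - gam J(i, i+d+1)] and [2 f(i, i+1) = - gam J(i, i)]. *)
Fixpoint diag_coef (d : nat) : R :=
  match d with 0 => 1 | 1 => 0 | d'.+2 => - diag_coef d' end.

Fixpoint jump_coef (d i : nat) : nat -> nat -> R :=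
  match d with
  | 0 => fun _ _ => 0
  | 1 => fun p q => 2^-1 * pair_delta i i p q
  | d'.+2 => fun p q => pair_delta i (i + d'.+1) p q - jump_coef d' i.+1 p q
  end.

Definition gap (i j : nat) : nat := (maxn i j - minn i j)%N.
Definition mid (i j : nat) : nat := (minn i j + (gap i j)./2)%N.

Definition diag_weight s (al : nat -> R) (m : nat) : R :=
  \sum_(i < s.+1) \sum_(j < s.+1)
     al i * al j * diag_coef (gap i j) * (mid i j == m)%:R.

Definition jump_weight_raw s (al : nat -> R) (p q : nat) : R :=
  \sum_(i < s.+1) \sum_(j < s.+1) al i * al j * jump_coef (gap i j) (minn i j) p q.

Definition jump_weight s (al : nat -> R) (p q : nat) : R :=
  2^-1 * (jump_weight_raw s al p q + jump_weight_raw s al q p).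

Lemma jump_weightC s al p q : jump_weight s al p q = jump_weight s al q p.
Proof. by rewrite /jump_weight addrC. Qed.

Lemma diag_coef_mid0 i j :
  diag_coef (gap i j) * (mid i j == 0)%:R = ((i == 0) && (j == 0))%:R :> R.
Proof.
have [mid0 | mid_ne0] := eqVneq (mid i j) 0%N; last first.
  rewrite mulr0; case: eqP => [i0|] //; case: eqP => [j0|] //.
  by move: mid_ne0; rewrite i0 j0.
move: mid0; rewrite /mid mulr1; case E: (gap i j) => [|[|g]] //= mid0.
- by have [-> ->] : i = 0%N /\ j = 0%N by move: E mid0; rewrite /gap; lia.
- have : ~~ ((i == 0) && (j == 0)).
    by apply/negP => /andP[/eqP i0 /eqP j0]; move: E; rewrite /gap i0 j0.
  by move/negbTE ->.
- by move: mid0; lia.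
Qed.

Lemma diag_weight0 s al : al 0%N = 1 -> diag_weight s al 0 = 1.
Proof.
move=> al0; rewrite /diag_weight.
under eq_bigr do under eq_bigr do rewrite -mulrA diag_coef_mid0.
rewrite big_ord_recl [X in _ + X]big1 => [|i _]; last first.
  by rewrite big1 // => j _; rewrite mulr0.
rewrite addr0 big_ord_recl [X in _ + X]big1 => [|j _]; last by rewrite mulr0.
by rewrite al0 !mulr1 !addr0.
Qed.

Lemma mid_leq_max i j : (mid i j <= maxn i j)%N.
Proof. by rewrite /mid /gap; lia. Qed.

Variables (f J : nat -> nat -> R) (gam : R) (s : nat).
Hypothesis fC : forall a b, f a b = f b a.
Hypothesis JC : forall a b, J a b = J b a.
Hypothesis f_shift : forall a b, f a.+1 b + f a b.+1 = - (gam * J a b).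

Lemma f_reduce d i : (i + d <= s)%N ->
  f i (i + d) = diag_coef d * f (i + d./2) (i + d./2)
                - gam * pair_sum s (jump_coef d i) J.
Proof.
elim/ltn_ind: d i => -[|[|d]] IH i le_s /=.
- rewrite addn0 mul1r /pair_sum big1 ?mulr0 ?subr0 // => p _.
  by rewrite big1 // => q _; rewrite mul0r.
- rewrite pair_sumZ pair_sum_delta ?mul0r ?sub0r; try lia.
  rewrite addn1; have := f_shift i i; rewrite fC => two_f.
  have -> : - (gam * (2^-1 * J i i)) = 2^-1 * - (gam * J i i) by ring.
  by rewrite -two_f; field.
- rewrite pair_sumB pair_sum_delta; try lia.
  have := f_shift i (i + d.+1); rewrite -addnS => /(canRL (addKr _)) ->.
  by rewrite -addSnnS IH ?addSnnS //=; [ring | lia].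
Qed.

Lemma f_reduce_gap i j : (i <= s)%N -> (j <= s)%N ->
  f i j = diag_coef (gap i j) * f (mid i j) (mid i j)
          - gam * pair_sum s (jump_coef (gap i j) (minn i j)) J.
Proof.
move=> le_is le_js; rewrite /mid -f_reduce; last by rewrite /gap; lia.
have [le_ij | lt_ji] := leqP i j.
  by congr f; rewrite /gap; lia.
by rewrite fC; congr f; rewrite /gap; lia.
Qed.

Lemma quadratic_form_reduction (al : nat -> R) : al 0%N = 1 ->
  \sum_(i < s.+1) \sum_(j < s.+1) al i * al j * f i j
  = f 0%N 0%N + \sum_(1 <= m < s.+1) diag_weight s al m * f m m
    - gam * pair_sum s (jump_weight s al) J.
Proof.
move=> al0.
have diag : \sum_(i < s.+1) \sum_(j < s.+1)
              al i * al j * diag_coef (gap i j) * f (mid i j) (mid i j)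
            = \sum_(m < s.+1) diag_weight s al m * f m m.
  symmetry; rewrite /diag_weight.
  under eq_bigr => m _ do rewrite mulr_suml.
  under eq_bigr => m _ do under eq_bigr => i _ do rewrite mulr_suml.
  rewrite exchange_big; apply: eq_bigr => i _; rewrite exchange_big; apply: eq_bigr => j _.
  under eq_bigr => m _ do rewrite eq_sym -mulrA mulrCA.
  rewrite (sum_ord_delta (fun m => al i * al j * diag_coef (gap i j) * f m m)) //.
  by have := mid_leq_max i j; have := ltn_ord i; have := ltn_ord j; lia.
have jumps : \sum_(i < s.+1) \sum_(j < s.+1)
               al i * al j * pair_sum s (jump_coef (gap i j) (minn i j)) J
             = pair_sum s (jump_weight s al) J.
  have w0E : pair_sum s (jump_weight_raw s al) J = \sum_(i < s.+1) \sum_(j < s.+1)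
               al i * al j * pair_sum s (jump_coef (gap i j) (minn i j)) J.
    rewrite (pair_sum_sum _ _
      (fun i p q => \sum_(j < s.+1) al i * al j * jump_coef (gap i j) (minn i j) p q)).
    apply: eq_bigr => i _.
    rewrite (pair_sum_sum _ _
      (fun j p q => al i * al j * jump_coef (gap i j) (minn i j) p q)).
    by apply: eq_bigr => j _; rewrite pair_sumZ.
  rewrite /jump_weight pair_sumZ pair_sumD (pair_sum_tr _ (jump_weight_raw s al)) //.
  by rewrite w0E; field.
rewrite (eq_bigr (fun i : 'I_s.+1 => \sum_(j < s.+1)
  (al i * al j * diag_coef (gap i j) * f (mid i j) (mid i j)
   - gam * (al i * al j * pair_sum s (jump_coef (gap i j) (minn i j)) J)))); last first.
  move=> i _; apply: eq_bigr => j _.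
  by rewrite f_reduce_gap -1?ltnS //; ring.
under eq_bigr do rewrite sumrB -mulr_sumr.
by rewrite sumrB -mulr_sumr diag jumps big_ord_recl diag_weight0 // mul1r big_add1 big_mkord.
Qed.

End QuadraticFormReduction.

Theorem proposition4p9
  (R : realFieldType) (N k : nat) (x : nat -> R) (xs A : 'I_N -> nat -> R)
  (beta tau : R) (s : nat) (c d : nat -> nat -> R)
  (D : ('I_N -> {poly R}) -> ('I_N -> {poly R})) :
  (0 < N)%N ->
  (forall n : nat, (n < N)%N -> x n < x n.+1) ->
  (forall i : 'I_N, xs i 0%N = x i /\ xs i k.+1 = x i.+1 /\
      forall j : nat, (j <= k)%N -> xs i j < xs i j.+1) ->
  assumptionS k x xs A ->
  (forall i : 'I_N, A i 0%N = 0) ->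
  0 < beta -> 0 < tau ->
  (0 < s)%N ->
  (forall l : nat, (l < s)%N -> \sum_(kap < l.+1) c l kap = 1) ->
  (forall v, inVk k v -> inVk k (D v) /\
     forall w, inVk k w -> ipstar k xs A (D v) w = tau * Hstar k x xs A beta v w) ->
  exists (b : nat -> R) (bb : nat -> nat -> R),
    (forall kap kap0 : nat, bb kap kap0 = bb kap0 kap) /\
    forall v, inVk k v ->
      ipstar k xs A (Rstar c d s D v) (Rstar c d s D v)
      = ipstar k xs A v v
        + \sum_(1 <= kap < s.+1) b kap * ipstar k xs A (iter kap D v) (iter kap D v)
        - tau * \sum_(kap < s) \sum_(kap0 < s)
                  bb kap kap0 * jumpip x (iter kap D v) (iter kap0 D v).
Proof.
move=> _ _ xs_ends HS _ _ _ _ c_rows HD.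
have xs_first i : xs i 0%N = x i by case: (xs_ends i).
have xs_last i : xs i k.+1 = x i.+1 by case: (xs_ends i) => _ [].
have quad_exact := assumptionS_quad_exact HS.
pose al n := (rk_poly c d s)`_n.
have al0 : al 0%N = 1 by apply: rk_poly_coef0.
exists (diag_weight s al), (fun p q => beta * jump_weight s al p q).
split=> [p q | v Hv]; first by rewrite jump_weightC.
pose u n := iter n D v.
have Hu n : inVk k (u n) by elim: n => [|n IH] //=; case: (HD _ IH).
have uC a b : ipstar k xs A (u a) (u b) = ipstar k xs A (u b) (u a).
  exact: (ipstarC xs_first xs_last quad_exact (Hu a) (Hu b)).
have uJC a b : jumpip x (u a) (u b) = jumpip x (u b) (u a) by apply: jumpipC.
have u_shift a b : ipstar k xs A (u a.+1) (u b) + ipstar k xs A (u a) (u b.+1)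
                   = - (tau * beta * jumpip x (u a) (u b)).
  rewrite (uC a b.+1) /u !iterS ((HD _ (Hu a)).2 _ (Hu b)) ((HD _ (Hu b)).2 _ (Hu a)).
  by rewrite -mulrDr (Hstar_addC quad_exact _ (Hu a) (Hu b)) mulrN mulrA.
rewrite /Rstar ipstar_sum_sum (quadratic_form_reduction s uC uJC u_shift al0).
by rewrite -mulrA -pair_sumZ.
Qed.
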